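(* Let $l\le d/2$, let $\ket{\psi_1},\dots,\ket{\psi_l}$ be unit vectors in $\mathbb{C}^d$ and $A_1,\dots,A_l\in[0,1]$ be such that $\mathbf{N}=(N_1,\dots,N_{l+1})$ with $N_i=A_i\ket{\psi_i}\bra{\psi_i}$ for $i\in[l]$ and $N_{l+1}=\mathbb{I}_d-\sum_{j=1}^lA_j\ket{\psi_j}\bra{\psi_j}$ is a POVM. Let $W=\mathrm{span}_{\mathbb{C}}\{\ket{\psi_i}:i\in[l]\}$, $W^\perp$ its orthogonal complement, and $|X|$ the dimension of a subspace $X$. Then $\Phi_t(\mathbf{N})\in\mathrm{SP}(d)$ for all $$0\le t\le t_{\mathbf{N}}:=\min_{i\in[l]}\frac{|W^\perp|A_i}{|W|(1-A_i)+|W^\perp|}.$$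
   Context: A POVM on $\mathbb{C}^d$ is a tuple of positive semidefinite operators summing to $\mathbb{I}_d$; projective if $M_iM_j=\delta_{ij}M_i$. A classical post-processing (numbers $q_{i|j}\ge0$, $\sum_iq_{i|j}=1$) maps effects $M_j$ to $\sum_jq_{i|j}M_j$. $\mathrm{SP}(d)$ is the set of finite effect-wise convex combinations of post-processed projective measurements on $\mathbb{C}^d$. $\Phi_t(X)=tX+(1-t)\frac{\mathrm{tr}X}{d}\mathbb{I}_d$, applied effect-wise to POVMs. *)

From HB Require Import structures.
From mathcomp Require Import all_boot all_order all_algebra.
From mathcomp Require Import reals complex.
Set Implicit Arguments. Unset Strict Implicit. Unset Printing Implicit Defensive.
Import Order.TTheory GRing.Theory Num.Theory.
Local Open Scope ring_scope.
Local Open Scope complex_scope.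

Definition adj (R : realType) (m n : nat) (A : 'M[R[i]]_(m, n)) : 'M[R[i]]_(n, m) :=
  (map_mx Num.conj A)^T.

Definition psd (R : realType) (d : nat) (A : 'M[R[i]]_d) : Prop :=
  A = adj A /\ forall v : 'cV[R[i]]_d, 0 <= (adj v *m A *m v) 0 0.

Definition is_povm (R : realType) (d n : nat) (M : 'I_n -> 'M[R[i]]_d) : Prop :=
  (forall k, psd (M k)) /\ \sum_(k < n) M k = 1%:M.

Definition is_projective (R : realType) (d n : nat) (M : 'I_n -> 'M[R[i]]_d) : Prop :=
  is_povm M /\ forall j k, M j *m M k = (if j == k then M j else 0).

(* classical post-processing q_{i|j}, i : 'I_m new outcome, j : 'I_n old outcome *)
Definition is_postproc (R : realType) (m n : nat) (q : 'I_m -> 'I_n -> R) : Prop :=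
  (forall i j, 0 <= q i j) /\ forall j, \sum_(i < m) q i j = 1.

Definition postproc (R : realType) (d m n : nat) (q : 'I_m -> 'I_n -> R)
  (M : 'I_n -> 'M[R[i]]_d) : 'I_m -> 'M[R[i]]_d :=
  fun i => \sum_(j < n) (q i j)%:C *: M j.

Definition SP (R : realType) (d m : nat) (N : 'I_m -> 'M[R[i]]_d) : Prop :=
  exists (k : nat) (p : 'I_k -> R) (n : 'I_k -> nat)
         (P : forall r : 'I_k, 'I_(n r) -> 'M[R[i]]_d)
         (q : forall r : 'I_k, 'I_m -> 'I_(n r) -> R),
    [/\ (forall r, 0 <= p r), \sum_(r < k) p r = 1,
        (forall r, is_projective (P r)), (forall r, is_postproc (q r)) &
        forall i, N i = \sum_(r < k) (p r)%:C *: postproc (q r) (P r) i].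

Definition Phi (R : realType) (d : nat) (t : R) (X : 'M[R[i]]_d) : 'M[R[i]]_d :=
  t%:C *: X + ((1 - t)%:C * \tr X / d%:R) *: 1%:M.

Definition PhiM (R : realType) (d m : nat) (t : R) (N : 'I_m -> 'M[R[i]]_d)
  : 'I_m -> 'M[R[i]]_d := fun i => Phi t (N i).

Definition Nmeas (R : realType) (d l : nat) (psi : 'I_l -> 'cV[R[i]]_d) (A : 'I_l -> R)
  : 'I_l.+1 -> 'M[R[i]]_d :=
  fun k => if unlift ord_max k is Some j then (A j)%:C *: (psi j *m adj (psi j))
           else 1%:M - \sum_(j < l) (A j)%:C *: (psi j *m adj (psi j)).

(* matrix whose rows are the psi_i (transposed); its rank is dim W *)
Definition Wmat (R : realType) (d l : nat) (psi : 'I_l -> 'cV[R[i]]_d) : 'M[R[i]]_(l, d) :=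
  \matrix_(k < l, j < d) psi k j 0.

From HB Require Import structures.
From mathcomp Require Import all_boot all_order all_algebra.
From mathcomp Require Import reals complex.
From mathcomp Require Import sesquilinear spectral.
From mathcomp Require Import ring lra zify.
Set Implicit Arguments. Unset Strict Implicit. Unset Printing Implicit Defensive.
Import Order.TTheory GRing.Theory Num.Theory.
Local Open Scope ring_scope.
Local Open Scope complex_scope.

(* Let W be the span of the psi_j, D = |W^perp| and b an orthonormal basis of
   W^perp.  Positivity of the last effect says B B^* <= 1 for the matrix B with
   columns sqrt(A_j) psi_j; hence also B^* B <= 1, i.e. 1 - B^* B = Y^* Y for
   some l x l matrix Y.  For every sign vector e and cyclic shift s of the basis
   b (this needs l <= D, which is where 2 l <= d enters) the vectors
     phi_j = sqrt(A_j) psi_j + sum_k (-1)^(e_k) Y_kj b_(k+s)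
   are orthonormal, and averaging phi_j phi_j^* over all e and s kills the cross
   terms, leaving A_j psi_j psi_j^* + (1 - A_j)/D P_(W^perp).  So Phi_t(N) is the
   mixture of these projective measurements, with total weight t, and of the
   measurement {b_m b_m^*} u {1 - P_(W^perp)}, with weight 1 - t, post-processed
   by weights that are nonnegative exactly when t <= t_N. *)

Section Adjoint.
Variable R : realType.
Local Notation C := R[i].

Lemma conjC_real (x : R) : Num.conj (x%:C : C) = x%:C.
Proof. exact: conjc_real. Qed.

Lemma conjC_realM (x : R) (z : C) : Num.conj (x%:C * z) = x%:C * Num.conj z.
Proof. by rewrite rmorphM; congr (_ * _); exact: conjc_real. Qed.

Lemma adjmxE m n (M : 'M[C]_(m, n)) i j : adj M i j = Num.conj (M j i).
Proof. by rewrite /adj !mxE. Qed.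

Lemma adjmxK m n (M : 'M[C]_(m, n)) : adj (adj M) = M.
Proof. by apply/matrixP => i j; rewrite !adjmxE conjCK. Qed.

Lemma adjmxD m n (M N : 'M[C]_(m, n)) : adj (M + N) = adj M + adj N.
Proof. by apply/matrixP => i j; rewrite !adjmxE !mxE rmorphD. Qed.

Lemma adjmxN m n (M : 'M[C]_(m, n)) : adj (- M) = - adj M.
Proof. by apply/matrixP => i j; rewrite !adjmxE !mxE rmorphN. Qed.

Lemma adjmxB m n (M N : 'M[C]_(m, n)) : adj (M - N) = adj M - adj N.
Proof. by rewrite adjmxD adjmxN. Qed.

Lemma adjmxZ m n (c : C) (M : 'M[C]_(m, n)) : adj (c *: M) = Num.conj c *: adj M.
Proof. by apply/matrixP => i j; rewrite !adjmxE !mxE rmorphM. Qed.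

Lemma adjmxM m n p (M : 'M[C]_(m, n)) (N : 'M[C]_(n, p)) :
  adj (M *m N) = adj N *m adj M.
Proof.
apply/matrixP => i j; rewrite adjmxE !mxE rmorph_sum; apply: eq_bigr => k _.
by rewrite rmorphM !adjmxE mulrC.
Qed.

Lemma adjmx_sum m n (I : finType) (F : I -> 'M[C]_(m, n)) :
  adj (\sum_i F i) = \sum_i adj (F i).
Proof.
apply/matrixP => i j; rewrite adjmxE !summxE rmorph_sum.
by apply: eq_bigr => k _; rewrite adjmxE.
Qed.

Lemma adjmx0 m n : adj (0 : 'M[C]_(m, n)) = 0.
Proof. by apply/matrixP => i j; rewrite adjmxE !mxE conjC0. Qed.

Lemma adjmx1 n : adj (1%:M : 'M[C]_n) = 1%:M.
Proof. by apply/matrixP => i j; rewrite adjmxE !mxE eq_sym rmorph_nat. Qed.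

Lemma adj_mul_self_ge0 d (x : 'cV[C]_d) : 0 <= (adj x *m x) 0 0.
Proof.
by rewrite mxE; apply: sumr_ge0 => i _; rewrite adjmxE mulrC mul_conjC_ge0.
Qed.

Lemma proj_psd d (P : 'M[C]_d) : P = adj P -> P *m P = P -> psd P.
Proof.
move=> P_herm P_idem; split => // v.
have -> : adj v *m P *m v = adj (P *m v) *m (P *m v).
  by rewrite adjmxM -P_herm -{1}P_idem !mulmxA.
exact: adj_mul_self_ge0.
Qed.

Lemma adjmx_delta m n (i : 'I_m) (j : 'I_n) :
  adj (delta_mx i j : 'M[C]_(m, n)) = delta_mx j i.
Proof.
apply/matrixP => k k'; rewrite adjmxE !mxE andbC.
by case: (_ && _); rewrite ?rmorph1 ?rmorph0.
Qed.

Lemma psd_tr_ge0 d (N : 'M[C]_d) : psd N -> 0 <= \tr N.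
Proof.
case=> _ N_ge0; apply: sumr_ge0 => a _.
by have := N_ge0 (delta_mx a 0); rewrite adjmx_delta -rowE -colE !mxE.
Qed.

End Adjoint.

Definition orthonormal_fam (R : realType) (d n : nat) (f : 'I_n -> 'cV[R[i]]_d) :=
  forall j k, adj (f j) *m f k = (j == k)%:R%:M.

Definition proj_meas (R : realType) (d n : nat) (f : 'I_n -> 'cV[R[i]]_d)
  : 'I_n.+1 -> 'M[R[i]]_d :=
  fun k => if unlift ord_max k is Some j then f j *m adj (f j)
           else 1%:M - \sum_j f j *m adj (f j).

Section ProjMeas.
Variable R : realType.
Local Notation C := R[i].
Variables (d n : nat) (f : 'I_n -> 'cV[C]_d).
Hypothesis f_on : orthonormal_fam f.

Local Notation Q j := (f j *m adj (f j)).
Local Notation S := (\sum_j Q j).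

Lemma orthonormal_projM j k : Q j *m Q k = if j == k then Q j else 0.
Proof.
rewrite mulmxA -(mulmxA (f j)) f_on mul_mx_scalar.
by case: eqP => [->|_]; rewrite ?scale1r // scale0r mul0mx.
Qed.

Lemma orthonormal_proj_sumM k : S *m Q k = Q k /\ Q k *m S = Q k.
Proof.
rewrite mulmx_suml mulmx_sumr; split; rewrite (bigD1 k) //= orthonormal_projM eqxx;
  by rewrite big1 ?addr0 // => j /negbTE kj; rewrite orthonormal_projM ?kj // eq_sym kj.
Qed.

Lemma orthonormal_sum_projM : S *m S = S.
Proof.
rewrite mulmx_sumr; apply: eq_bigr => k _; exact: (orthonormal_proj_sumM k).1.
Qed.

Lemma proj_measM j k :
  proj_meas f j *m proj_meas f k = if j == k then proj_meas f j else 0.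
Proof.
rewrite /proj_meas; case: (unliftP ord_max j) => [j'|] ->;
  case: (unliftP ord_max k) => [k'|] ->.
- by rewrite orthonormal_projM (inj_eq lift_inj).
- rewrite eq_sym (negbTE (neq_lift _ _)) mulmxBr mulmx1.
  by rewrite (orthonormal_proj_sumM _).2 subrr.
- rewrite (negbTE (neq_lift _ _)) mulmxBl mul1mx.
  by rewrite (orthonormal_proj_sumM _).1 subrr.
- by rewrite eqxx mulmxBl mul1mx mulmxBr mulmx1 orthonormal_sum_projM subrr subr0.
Qed.

Lemma proj_meas_projective : is_projective (proj_meas f).
Proof.
have herm k : proj_meas f k = adj (proj_meas f k).
  rewrite /proj_meas; case: (unlift _ _) => [j|]; first by rewrite adjmxM adjmxK.
  rewrite adjmxB adjmx1 adjmx_sum; congr (_ - _).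
  by apply: eq_bigr => j _; rewrite adjmxM adjmxK.
split; last exact: proj_measM.
split=> [k|]; first by apply: proj_psd; rewrite ?proj_measM ?eqxx.
rewrite (bigD1_ord ord_max) //= {1}/proj_meas unlift_none.
by under eq_bigr do rewrite /proj_meas liftK; rewrite subrK.
Qed.

End ProjMeas.

Section Postprocessing.
Variable R : realType.
Local Notation C := R[i].

Lemma postproc_sum d m n (q : 'I_m -> 'I_n -> R) (P : 'I_n -> 'M[C]_d) :
  is_postproc q -> \sum_k P k = 1%:M -> \sum_i postproc q P i = 1%:M.
Proof.
move=> [_ q_sum1] P_sum; rewrite /postproc exchange_big /= -P_sum.
by apply: eq_bigr => j _; rewrite -scaler_suml -rmorph_sum q_sum1 scale1r.
Qed.

Definition qid n : 'I_n -> 'I_n -> R := fun i j => (i == j)%:R.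

Lemma qid_postproc n : is_postproc (@qid n).
Proof.
split=> [i j|j]; first by rewrite /qid ler0n.
by rewrite /qid (bigD1 j) //= eqxx big1 ?addr0 // => i /negbTE ->.
Qed.

Lemma postproc_qid d n (P : 'I_n -> 'M[C]_d) i : postproc (@qid n) P i = P i.
Proof.
rewrite /postproc (bigD1 i) //= /qid eqxx scale1r big1 ?addr0 // => j.
by rewrite eq_sym => /negbTE ->; rewrite scale0r.
Qed.

Lemma SP_mixture d m (T : finType) (N : 'I_m -> 'M[C]_d) (w : T -> R) (n : T -> nat)
    (P : forall s, 'I_(n s) -> 'M[C]_d) (q : forall s, 'I_m -> 'I_(n s) -> R) :
  (forall s, 0 <= w s) -> \sum_s w s = 1 -> (forall s, is_projective (P s)) ->
  (forall s, is_postproc (q s)) ->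
  (forall i, N i = \sum_s (w s)%:C *: postproc (q s) (P s) i) -> SP N.
Proof.
move=> w_ge0 w_sum1 P_proj q_post N_eq.
exists #|T|, (fun r => w (enum_val r)), (fun r => n (enum_val r)),
  (fun r => P (enum_val r)), (fun r => q (enum_val r)); split=> //.
- by rewrite -w_sum1 (big_enum_val (fun s => w s)).
- move=> i; rewrite N_eq.
  exact: (big_enum_val (fun s => (w s)%:C *: postproc (q s) (P s) i)).
Qed.

Lemma projective_SP d m (P : 'I_m -> 'M[C]_d) : is_projective P -> SP P.
Proof.
move=> P_proj; apply: (@SP_mixture _ _ 'I_1 _ (fun=> 1) (fun=> m) (fun=> P)
  (fun=> @qid m)) => // [|_|i]; first by rewrite big_ord1.
  exact: qid_postproc.
by rewrite big_ord1 rmorph1 scale1r postproc_qid.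
Qed.

End Postprocessing.

Section DepolarizingMap.
Variable R : realType.
Local Notation C := R[i].

Lemma Phi_sum d (I : finType) (t : R) (F : I -> 'M[C]_d) :
  \sum_i Phi t (F i) = Phi t (\sum_i F i).
Proof.
rewrite /Phi big_split /= -scaler_sumr -scaler_suml; congr (_ + _ *: _).
by rewrite raddf_sum /= -mulr_suml -mulr_sumr.
Qed.

Lemma Phi1 d (t : R) : Phi t (1%:M : 'M[C]_d) = 1%:M.
Proof.
case: d => [|d]; first by rewrite [LHS]flatmx0 [RHS]flatmx0.
rewrite /Phi mxtrace1 mulfK ?pnatr_eq0 //.
by rewrite -scalerDl rmorphB rmorph1 addrC subrK scale1r.
Qed.

Lemma eq_last_effect d n (X Y : 'I_n.+1 -> 'M[C]_d) :
  \sum_i X i = \sum_i Y i -> (forall j, X (lift ord_max j) = Y (lift ord_max j)) ->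
  X ord_max = Y ord_max.
Proof.
rewrite (bigD1_ord ord_max) // [in RHS](bigD1_ord ord_max) //= => XY_sum XY_lift.
by move: XY_sum; under eq_bigr do rewrite XY_lift; move/addIr.
Qed.

End DepolarizingMap.

Section Nmeas.
Variable R : realType.
Local Notation C := R[i].
Variables (d l : nat) (psi : 'I_l -> 'cV[C]_d) (A : 'I_l -> R).
Hypothesis psi_unit : forall k, adj (psi k) *m psi k = 1.

Lemma mxtrace_scaled_outer j : \tr ((A j)%:C *: (psi j *m adj (psi j))) = (A j)%:C.
Proof. by rewrite mxtraceZ mxtrace_mulC psi_unit mxtrace1 mulr1. Qed.

Lemma Nmeas_weight_sum_le : is_povm (Nmeas psi A) -> \sum_j A j <= d%:R.
Proof.
move=> [N_psd _]; have := psd_tr_ge0 (N_psd ord_max).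
have -> : \tr (Nmeas psi A ord_max) = d%:R - \sum_j (A j)%:C.
  rewrite /Nmeas unlift_none mxtraceD mxtrace1 -scaleN1r mxtraceZ mulN1r.
  by congr (_ - _); rewrite raddf_sum; apply: eq_bigr => j _; apply: mxtrace_scaled_outer.
by rewrite subr_ge0 -rmorph_sum -(rmorph_nat (complex.real_complex R)) lecR.
Qed.

Lemma sum_weight_le (w : 'I_l -> R) : (0 < d)%N -> is_povm (Nmeas psi A) ->
  (forall j, w j <= A j / d%:R) -> \sum_j w j <= 1.
Proof.
move=> d_gt0 N_povm w_le; apply: le_trans (ler_sum _ (fun j _ => w_le j)) _.
by rewrite -mulr_suml ler_pdivrMr ?ltr0n // mul1r Nmeas_weight_sum_le.
Qed.

End Nmeas.

Lemma SP_PhiM_Nmeas0 (R : realType) d (psi : 'I_0 -> 'cV[R[i]]_d) A t :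
  SP (PhiM t (Nmeas psi A)).
Proof.
have PhiN1 i : PhiM t (Nmeas psi A) i = 1%:M.
  by rewrite /PhiM /Nmeas; case: unliftP => [[]|_] //; rewrite big_ord0 subr0 Phi1.
apply: projective_SP; split; first split.
- by move=> k; rewrite PhiN1; apply: proj_psd; [rewrite adjmx1 | exact: mul1mx].
- by rewrite big_ord1 PhiN1.
- by move=> j k; rewrite !PhiN1 !ord1 mul1mx.
Qed.

Section Spectral.
Variable R : realType.
Local Notation C := R[i].
Local Open Scope sesquilinear_scope.

Lemma adjmx_trC m n (M : 'M[C]_(m, n)) : adj M = M ^t*.
Proof. by apply/matrixP => i j; rewrite !mxE. Qed.

Lemma orthocomplement_onb d l (psi : 'I_l -> 'cV[C]_d) :
  exists (D : nat) (b : 'I_D -> 'cV[C]_d), [/\ D = (d - \rank (Wmat psi))%N,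
    orthonormal_fam b & forall m j, adj (b m) *m psi j = 0].
Proof.
pose X := orthomx Num.conj (hermitian1mx d) (map_mx Num.conj (Wmat psi)).
pose U := schmidt (row_base X).
have U_unitary : U \is unitarymx by apply: schmidt_unitarymx; exact: rank_leq_col.
have UX : (U <= X)%MS.
  by rewrite (eqmx_schmidt_free (row_base_free X)) eq_row_base.
exists (\rank X), (fun m => adj (row m U)); split.
- by rewrite rank_ortho mxrank_map.
- move=> m m'; rewrite adjmxK; apply/matrixP => i j; rewrite !ord1.
  move/unitarymxP: U_unitary => /matrixP /(_ m m'); rewrite !mxE => <-.
  by apply: eq_bigr => a _; rewrite !mxE.
- move=> m j.
  have /orthomx1P /matrixP /(_ 0 j) : (row m U <= X)%MS by apply: submx_trans UX; exact: row_sub.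
  rewrite !mxE => Um_perp.
  apply/matrixP => i k; rewrite !ord1 [RHS]mxE -Um_perp mxE; apply: eq_bigr => a _.
  by rewrite adjmxK !mxE conjCK.
Qed.

Section PsdEigenvalue.
Variables (d l : nat) (B : 'M[C]_(d, l)).
Hypothesis BB_le1 : psd (1%:M - B *m adj B).

(* Testing [1 - B B^*] on [B v] gives [0 <= lam (1 - lam)], while
   [|B v|^2 = 1 - lam]. *)
Lemma adj_mul_eigen_ge0 (v : 'cV[C]_l) (lam : C) :
  adj v *m v = 1%:M -> (1%:M - adj B *m B) *m v = lam *: v -> 0 <= lam.
Proof.
move=> v_unit v_eigen; pose x := B *m v.
have BBv : adj B *m x = (1 - lam) *: v.
  by rewrite mulmxA -[adj B *m B](subKr 1%:M) mulmxBl mul1mx v_eigen scalerBl scale1r.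
have xx : adj x *m x = (1 - lam)%:M.
  by rewrite /x adjmxM -mulmxA BBv -scalemxAr v_unit scale_scalar_mx mulr1.
have mu_ge0 : 0 <= 1 - lam by have := adj_mul_self_ge0 x; rewrite xx mxE.
have BBx_norm : adj (adj B *m x) *m (adj B *m x) = ((1 - lam) ^+ 2)%:M.
  by rewrite BBv adjmxZ -scalemxAl -scalemxAr v_unit geC0_conj // !scale_scalar_mx mulr1.
have : 0 <= (1 - lam) - (1 - lam) ^+ 2.
  have := (proj2 BB_le1) x; rewrite mulmxBr mulmx1 mulmxBl xx.
  have -> : adj x *m (B *m adj B) *m x = adj (adj B *m x) *m (adj B *m x).
    by rewrite adjmxM adjmxK !mulmxA.
  by rewrite BBx_norm !mxE.
have [-> _|lam_neq1] := eqVneq lam 1; first exact: ler01.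
have mu_gt0 : 0 < 1 - lam by rewrite lt_def subr_eq0 eq_sym lam_neq1.
by rewrite expr2 -{1}[1 - lam]mulr1 -mulrBr pmulr_rge0 // opprB addrC subrK.
Qed.

Lemma gram_factor : exists Y : 'M[C]_l, 1%:M - adj B *m B = adj Y *m Y.
Proof.
pose M := 1%:M - adj B *m B; pose P := spectralmx M; pose sp := spectral_diag M.
have P_unitary : P *m adj P = 1%:M by rewrite adjmx_trC; apply/unitarymxP/spectral_unitarymx.
have M_herm : M \is hermsymmx.
  by apply/is_hermitianmxP; rewrite expr0 scale1r -adjmx_trC adjmxB adjmx1 adjmxM adjmxK.
have M_eq : M = adj P *m diag_mx sp *m P.
  rewrite adjmx_trC -invmx_unitary ?spectral_unitarymx //.
  exact/orthomx_spectralP/hermitian_normalmx.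
have sp_ge0 k : 0 <= sp 0 k.
  apply: (@adj_mul_eigen_ge0 (adj P *m delta_mx k 0)).
    rewrite adjmxM adjmxK adjmx_delta mulmxA -(mulmxA _ P) P_unitary mulmx1.
    by rewrite mul_delta_mx; apply/matrixP => i j; rewrite !ord1 !mxE.
  rewrite -/M {1}M_eq -!mulmxA (mulmxA P) P_unitary mul1mx scalemxAr; congr (_ *m _).
  apply/matrixP => i j; rewrite mul_diag_mx !mxE.
  by case: eqP => [->|]; rewrite ?mulr0 ?mulr1.
pose D := diag_mx (map_mx sqrtC sp).
have DD : adj D *m D = diag_mx sp.
  have -> : adj D = D.
    apply/matrixP => i j; rewrite adjmxE !mxE eq_sym.
    by case: eqP => [->|]; rewrite ?mulr1n ?mulr0n ?conjC0 // geC0_conj ?sqrtC_ge0.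
  by rewrite mulmx_diag; congr diag_mx; apply/matrixP => i j; rewrite !mxE -expr2 sqrtCK ord1.
by exists (D *m P); rewrite adjmxM !mulmxA -(mulmxA (adj P)) DD -M_eq.
Qed.

End PsdEigenvalue.
End Spectral.

Lemma big_option (V : nmodType) (T : finType) (F : option T -> V) :
  \sum_s F s = F None + \sum_x F (Some x).
Proof.
rewrite (bigD1 None) //=; congr (_ + _).
rewrite (reindex_omap Some id) => [|[x|] //].
by apply: eq_bigl => x; rewrite eqxx.
Qed.

Section SignVectors.
Variables (K : numDomainType) (l : nat).
Implicit Types (e : {ffun 'I_l -> bool}) (k : 'I_l).

Definition flip k e : {ffun 'I_l -> bool} :=
  [ffun x => if x == k then ~~ e x else e x].

Lemma flipK k : involutive (flip k).
Proof. by move=> e; apply/ffunP => x; rewrite !ffunE; case: (x == k); rewrite ?negbK. Qed.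

Lemma sum_flip_odd k (F : {ffun 'I_l -> bool} -> K) :
  (forall e, F (flip k e) = - F e) -> \sum_e F e = 0.
Proof.
move=> F_odd; have sumF_opp : \sum_e F e = - \sum_e F e.
  rewrite {1}(reindex_inj (inv_inj (flipK k))) /= -sumrN.
  by apply: eq_bigr => e _; rewrite F_odd.
have /eqP : (\sum_e F e) *+ 2 = 0 by rewrite mulr2n {1}sumF_opp addNr.
by rewrite mulrn_eq0 => /eqP.
Qed.

Lemma sum_sign k : \sum_(e : {ffun 'I_l -> bool}) (-1) ^+ e k = 0 :> K.
Proof.
apply: (@sum_flip_odd k (fun e => (-1) ^+ e k)) => e; rewrite ffunE eqxx.
by case: (e k); rewrite ?opprK.
Qed.

Lemma sum_signM k k' :
  \sum_(e : {ffun 'I_l -> bool}) (-1) ^+ e k * (-1) ^+ e k' =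
    (if k == k' then (2 ^ l)%:R else 0) :> K.
Proof.
case: eqP => [<-|/eqP k'k].
  rewrite (eq_bigr (fun _ => 1)) => [|e _]; last by rewrite -expr2 sqrr_sign.
  by rewrite sumr_const card_ffun card_bool card_ord.
apply: (@sum_flip_odd k (fun e => (-1) ^+ e k * (-1) ^+ e k')) => e.
rewrite !ffunE eqxx eq_sym (negbTE k'k).
by case: (e k); rewrite ?mulNr ?opprK.
Qed.

End SignVectors.

Definition weighted_frame (R : realType) (d l : nat) (psi : 'I_l -> 'cV[R[i]]_d)
  (A : 'I_l -> R) : 'M[R[i]]_(d, l) := \matrix_(a, j) ((Num.sqrt (A j))%:C * psi j a 0).

Section WeightedFrame.
Variable R : realType.
Local Notation C := R[i].
Variables (d l : nat) (psi : 'I_l -> 'cV[C]_d) (A : 'I_l -> R).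
Local Notation B := (weighted_frame psi A).

Lemma weighted_frame_mul_adj : (forall k, 0 <= A k) ->
  B *m adj B = \sum_j (A j)%:C *: (psi j *m adj (psi j)).
Proof.
move=> A_ge0; apply/matrixP => a a'; rewrite !mxE summxE; apply: eq_bigr => j _.
rewrite /weighted_frame adjmxE !mxE big_ord1 adjmxE conjC_realM.
rewrite -[in RHS](sqr_sqrtr (A_ge0 j)) rmorphXn /=; ring.
Qed.

Lemma adj_weighted_frame_mulE j m : (adj B *m B) j m =
  (Num.sqrt (A j) * Num.sqrt (A m))%:C * (adj (psi j) *m psi m) 0 0.
Proof.
rewrite /weighted_frame !mxE mulr_sumr; apply: eq_bigr => a _.
by rewrite !adjmxE !mxE conjC_realM rmorphM; ring.
Qed.

End WeightedFrame.

Section RandomFrames.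
Variable R : realType.
Local Notation C := R[i].
Variables (d l D : nat) (psi : 'I_l -> 'cV[C]_d) (A : 'I_l -> R).
Variables (b : 'I_D -> 'cV[C]_d) (Y : 'M[C]_l).
Hypothesis D_gt0 : (0 < D)%N.
Hypothesis l_le_D : (l <= D)%N.
Hypothesis A_ge0 : forall k, 0 <= A k.
Hypothesis psi_unit : forall k, adj (psi k) *m psi k = 1.
Hypothesis b_on : orthonormal_fam b.
Hypothesis b_perp : forall m j, adj (b m) *m psi j = 0.
Hypothesis Y_gram : 1%:M - adj (weighted_frame psi A) *m weighted_frame psi A = adj Y *m Y.

Definition shift (s : 'I_D) (k : 'I_l) : 'I_D := Ordinal (ltn_pmod (k + s) D_gt0).

Lemma shift_injl s : injective (shift s).
Proof.
move=> k k' /(congr1 val) /= /eqP; rewrite eqn_modDr.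
rewrite !modn_small ?(leq_trans (ltn_ord _) l_le_D) // => /eqP k_eq.
exact: val_inj.
Qed.

Lemma shift_injr k : injective (shift^~ k).
Proof.
move=> s s' /(congr1 val) /= /eqP; rewrite eqn_modDl.
by rewrite !modn_small // => /eqP s_eq; apply: val_inj.
Qed.

Definition xi (e : {ffun 'I_l -> bool}) s j : 'cV[C]_d :=
  \sum_k (Y k j * (-1) ^+ e k) *: b (shift s k).

Definition frame e s j : 'cV[C]_d := (Num.sqrt (A j))%:C *: psi j + xi e s j.

Lemma adjmx_sumZ (I : finType) (c : I -> C) (u : I -> 'cV[C]_d) :
  adj (\sum_i c i *: u i) = \sum_i Num.conj (c i) *: adj (u i).
Proof. by rewrite adjmx_sum; apply: eq_bigr => i _; rewrite adjmxZ. Qed.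

Lemma psi_perp_xi e s j j' : adj (psi j') *m xi e s j = 0.
Proof.
rewrite /xi mulmx_sumr big1 // => k _.
by rewrite -scalemxAr -[b _]adjmxK -adjmxM b_perp adjmx0 scaler0.
Qed.

Lemma xi_perp_psi e s j j' : adj (xi e s j) *m psi j' = 0.
Proof. by rewrite -[psi j']adjmxK -adjmxM psi_perp_xi adjmx0. Qed.

Lemma adj_xi_mul e s j m : adj (xi e s j) *m xi e s m = ((adj Y *m Y) j m)%:M.
Proof.
rewrite /xi adjmx_sumZ mulmx_suml mxE raddf_sum /=; apply: eq_bigr => k _.
rewrite -scalemxAl mulmx_sumr (bigD1 k) //= big1 => [|k' k'k].
  rewrite addr0 -scalemxAr b_on eqxx scale_scalar_mx mulr1 rmorphM rmorph_sign.
  by rewrite scale_scalar_mx mulrACA -expr2 sqrr_sign mulr1 adjmxE.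
rewrite -scalemxAr b_on (inj_eq (@shift_injl s)) eq_sym (negbTE k'k).
by rewrite scale_scalar_mx mulr0; apply/matrixP => i i'; rewrite !mxE mul0rn.
Qed.

Lemma frame_orthonormal e s : orthonormal_fam (frame e s).
Proof.
move=> j m; rewrite /frame adjmxD adjmxZ mulmxDl !mulmxDr -!scalemxAl -!scalemxAr.
rewrite psi_perp_xi xi_perp_psi !scaler0 addr0 add0r adj_xi_mul -Y_gram.
rewrite [(_ - _ : 'M_l) j m]mxE [(- _ : 'M_l) j m]mxE adj_weighted_frame_mulE.
apply/matrixP => i i'; rewrite !ord1 !mxE conjC_real rmorphM.
by rewrite !mulr1n; ring.
Qed.

Local Notation Pb := (\sum_m b m *m adj (b m)).

Lemma sum_xi s j : \sum_e xi e s j = 0.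
Proof.
rewrite /xi exchange_big big1 // => k _.
by rewrite -scaler_suml -mulr_sumr sum_sign mulr0 scale0r.
Qed.

Lemma mul_adj_sumZ (I : finType) (c c' : I -> C) (u v : I -> 'cV[C]_d) :
  (\sum_i c i *: u i) *m adj (\sum_i c' i *: v i) =
  \sum_i \sum_i' (c i * Num.conj (c' i')) *: (u i *m adj (v i')).
Proof.
rewrite adjmx_sumZ mulmx_suml; apply: eq_bigr => i _.
rewrite mulmx_sumr; apply: eq_bigr => i' _.
by rewrite -scalemxAl -scalemxAr scalerA.
Qed.

Lemma sum_xi_mul_adj s j : \sum_e xi e s j *m adj (xi e s j) =
  \sum_k (Y k j * Num.conj (Y k j) * (2 ^ l)%:R) *: (b (shift s k) *m adj (b (shift s k))).
Proof.
rewrite /xi; under eq_bigr do rewrite mul_adj_sumZ.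
rewrite exchange_big; apply: eq_bigr => k _.
rewrite exchange_big (bigD1 k) //= [X in _ + X]big1 => [|k' k'k].
  rewrite addr0 -scaler_suml; congr (_ *: _).
  under eq_bigr do rewrite rmorphM rmorph_sign mulrACA.
  by rewrite -mulr_sumr sum_signM eqxx.
rewrite -scaler_suml.
under eq_bigr do rewrite rmorphM rmorph_sign mulrACA.
by rewrite -mulr_sumr sum_signM eq_sym (negbTE k'k) mulr0 scale0r.
Qed.

Lemma sum_shift k : \sum_s b (shift s k) *m adj (b (shift s k)) = Pb.
Proof. by rewrite [RHS](reindex_inj (@shift_injr k)). Qed.

Lemma gram_col_norm j : \sum_k Y k j * Num.conj (Y k j) = 1 - (A j)%:C.
Proof.
have := congr1 (fun M : 'M[C]_l => M j j) Y_gram.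
rewrite [(_ - _ : 'M_l) j j]mxE [(- _ : 'M_l) j j]mxE adj_weighted_frame_mulE.
rewrite psi_unit !mxE eqxx !mulr1n mulr1 -expr2 sqr_sqrtr // => ->.
by apply: eq_bigr => k _; rewrite adjmxE mulrC.
Qed.

Lemma frame_mul_adj e s j : frame e s j *m adj (frame e s j) =
  (A j)%:C *: (psi j *m adj (psi j)) + (Num.sqrt (A j))%:C *: (psi j *m adj (xi e s j)) +
  (Num.sqrt (A j))%:C *: (xi e s j *m adj (psi j)) + xi e s j *m adj (xi e s j).
Proof.
rewrite /frame adjmxD adjmxZ mulmxDl !mulmxDr -!scalemxAl -!scalemxAr conjC_real.
by rewrite scalerA -rmorphM -expr2 sqr_sqrtr // !addrA.
Qed.

Lemma sum_frame_mul_adj j : \sum_e \sum_s frame e s j *m adj (frame e s j) =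
  ((2 ^ l * D)%:R * (A j)%:C) *: (psi j *m adj (psi j)) +
  ((2 ^ l)%:R * (1 - (A j)%:C)) *: Pb.
Proof.
rewrite exchange_big /=.
have sum_e s : \sum_e frame e s j *m adj (frame e s j) =
   ((2 ^ l)%:R * (A j)%:C) *: (psi j *m adj (psi j)) +
   \sum_k (Y k j * Num.conj (Y k j) * (2 ^ l)%:R) *: (b (shift s k) *m adj (b (shift s k))).
  have sum_psi_xi : \sum_e psi j *m adj (xi e s j) = 0.
    by rewrite -mulmx_sumr -adjmx_sum sum_xi adjmx0 mulmx0.
  have sum_xi_psi : \sum_e xi e s j *m adj (psi j) = 0.
    by rewrite -mulmx_suml sum_xi mul0mx.
  under eq_bigr do rewrite frame_mul_adj.
  rewrite !big_split /= sum_xi_mul_adj -!scaler_sumr sum_psi_xi sum_xi_psi.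
  rewrite !scaler0 !addr0 sumr_const card_ffun card_bool card_ord.
  by rewrite -scaler_nat scalerA mulrC.
under eq_bigr do rewrite sum_e.
rewrite big_split /= sumr_const card_ord -scaler_nat scalerA.
congr (_ + _); first by congr (_ *: _); rewrite natrM; ring.
rewrite exchange_big /=.
under eq_bigr do rewrite -scaler_sumr sum_shift.
by rewrite -scaler_suml -mulr_suml gram_col_norm mulrC.
Qed.

End RandomFrames.

Section Depolarized.
Variable R : realType.
Local Notation C := R[i].
Variables (d l D : nat) (psi : 'I_l -> 'cV[C]_d) (A : 'I_l -> R).
Variables (b : 'I_D -> 'cV[C]_d) (Y : 'M[C]_l) (t : R).
Hypothesis D_gt0 : (0 < D)%N.
Hypothesis l_le_D : (l <= D)%N.
Hypothesis d_gt0 : (0 < d)%N.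
Hypothesis A_in01 : forall k, 0 <= A k <= 1.
Hypothesis psi_unit : forall k, adj (psi k) *m psi k = 1.
Hypothesis b_on : orthonormal_fam b.
Hypothesis b_perp : forall m j, adj (b m) *m psi j = 0.
Hypothesis Y_gram : 1%:M - adj (weighted_frame psi A) *m weighted_frame psi A = adj Y *m Y.
Hypothesis N_povm : is_povm (Nmeas psi A).
Hypothesis t_ge0 : 0 <= t.
Hypothesis t_le1 : t <= 1.
Hypothesis t_small : forall j, t * (1 - A j) / D%:R <= (1 - t) * A j / d%:R.

Let A_ge0 k : 0 <= A k. Proof. by case/andP: (A_in01 k). Qed.
Let A_le1 k : A k <= 1. Proof. by case/andP: (A_in01 k). Qed.
Let DR_gt0 : 0 < D%:R :> R. Proof. by rewrite ltr0n. Qed.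

(* After the random frames have produced [t A_j psi_j psi_j^*] plus
   [t (1 - A_j)/D] times the projection onto [W^perp], the rest of
   [Phi_t(N_j)] is [(1 - t) A_j/d] on [W] and [gap j] on [W^perp]. *)
Definition gap j := (1 - t) * A j / d%:R - t * (1 - A j) / D%:R.

(* [t = 1] forces [gap = 0], so the junk value [x / 0 = 0] is harmless. *)
Definition gap_rate j := gap j / (1 - t).

Lemma mulr_gap_rate j : (1 - t) * gap_rate j = gap j.
Proof.
rewrite /gap_rate; have [t1|t_neq1] := eqVneq t 1; last first.
  by rewrite mulrCA mulfV ?mulr1 // subr_eq0 eq_sym.
have h1 : (1 - A j) / D%:R <= 0 by have := t_small j; rewrite t1 subrr !mul0r mul1r.
have h2 : 0 <= (1 - A j) / D%:R by rewrite divr_ge0 ?ler0n // subr_ge0 A_le1.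
have -> : gap j = 0.
  by apply/eqP; rewrite /gap t1 subrr !mul0r mul1r sub0r oppr_eq0 eq_le h1 h2.
by rewrite mul0r mulr0.
Qed.

Lemma gap_rate_ge0 j : 0 <= gap_rate j.
Proof. by rewrite divr_ge0 ?subr_ge0 // /gap subr_ge0. Qed.

Lemma gap_rate_le j : gap_rate j <= A j / d%:R.
Proof.
rewrite /gap_rate; have [->|t_neq1] := eqVneq t 1.
  by rewrite subrr invr0 mulr0 divr_ge0 ?ler0n.
have t_lt1 : 0 < 1 - t by rewrite subr_gt0 lt_neqAle t_neq1.
rewrite ler_pdivrMr // /gap.
have -> : (1 - t) * A j / d%:R = A j / d%:R * (1 - t) by ring.
rewrite gerBl.
by rewrite divr_ge0 ?mulr_ge0 ?subr_ge0 ?ler0n.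
Qed.

Definition remainder_postproc : 'I_l.+1 -> 'I_D.+1 -> R := fun i k =>
  match unlift ord_max i, unlift ord_max k with
  | Some j, Some _ => gap_rate j
  | Some j, None => A j / d%:R
  | None, Some _ => 1 - \sum_j gap_rate j
  | None, None => 1 - \sum_j A j / d%:R
  end.

Lemma remainder_postproc_is_postproc : is_postproc remainder_postproc.
Proof.
have sumA_le1 : \sum_j A j / d%:R <= 1 by apply: (sum_weight_le psi_unit d_gt0 N_povm).
have sum_rate_le1 : \sum_j gap_rate j <= 1.
  exact: (sum_weight_le psi_unit d_gt0 N_povm gap_rate_le).
split=> [i k|k].
  rewrite /remainder_postproc; case: (unlift _ i) => [j|]; case: (unlift _ k) => [k'|].
  - exact: gap_rate_ge0.
  - by rewrite divr_ge0 ?ler0n.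
  - by rewrite subr_ge0.
  - by rewrite subr_ge0.
rewrite (bigD1_ord ord_max) //= /remainder_postproc unlift_none.
under eq_bigr do rewrite liftK.
by case: (unlift _ k) => [k'|]; rewrite subrK.
Qed.

Local Notation phi e s := (frame psi A b Y D_gt0 e s).

Unset Implicit Arguments.

Definition mix_index := option ({ffun 'I_l -> bool} * 'I_D).

Definition mix_weight (x : mix_index) : R :=
  if x is Some _ then t / (2 ^ l * D)%:R else 1 - t.

Definition mix_size (x : mix_index) : nat := if x is Some _ then l.+1 else D.+1.

Definition mix_meas (x : mix_index) : 'I_(mix_size x) -> 'M[C]_d :=
  match x with Some es => proj_meas (phi es.1 es.2) | None => proj_meas b end.

Definition mix_postproc (x : mix_index) : 'I_l.+1 -> 'I_(mix_size x) -> R :=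
  match x with Some _ => @qid R l.+1 | None => remainder_postproc end.

Set Implicit Arguments.

Lemma mix_weight_sum : \sum_x mix_weight x = 1.
Proof.
rewrite big_option /= sumr_const card_prod card_ffun card_bool !card_ord.
rewrite -[t / _ *+ _]mulr_natr divfK ?subrK //.
by rewrite pnatr_eq0 muln_eq0 expn_eq0 negb_or -lt0n D_gt0.
Qed.

Lemma mix_meas_projective x : is_projective (mix_meas x).
Proof.
case: x => [[e s]|]; apply: proj_meas_projective => //.
exact: frame_orthonormal.
Qed.

Lemma mix_postproc_is_postproc x : is_postproc (mix_postproc x).
Proof. by case: x => [?|]; [exact: qid_postproc | exact: remainder_postproc_is_postproc]. Qed.

Local Notation mixture i :=
  (\sum_x (mix_weight x)%:C *: postproc (mix_postproc x) (mix_meas x) i).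

Lemma PhiM_Nmeas_lift j : PhiM t (Nmeas psi A) (lift ord_max j) = mixture (lift ord_max j).
Proof.
rewrite big_option /=.
have -> : \sum_x (mix_weight (Some x))%:C *:
    postproc (mix_postproc (Some x)) (mix_meas (Some x)) (lift ord_max j) =
  (t / (2 ^ l * D)%:R)%:C *: \sum_e \sum_s phi e s j *m adj (phi e s j).
  rewrite pair_big scaler_sumr; apply: eq_bigr => -[e s] _ /=.
  by rewrite postproc_qid /proj_meas liftK.
rewrite sum_frame_mul_adj //.
have -> : postproc remainder_postproc (proj_meas b) (lift ord_max j) =
    (gap_rate j)%:C *: \sum_m b m *m adj (b m) +
    (A j / d%:R)%:C *: (1%:M - \sum_m b m *m adj (b m)).
  rewrite /postproc (bigD1_ord ord_max) // [LHS]addrC /remainder_postproc /proj_meas.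
  rewrite liftK !unlift_none scaler_sumr; congr (_ + _).
  by apply: eq_bigr => m _; rewrite !liftK.
rewrite /PhiM /Nmeas liftK /Phi (mxtrace_scaled_outer _ psi_unit) scalerDr !scalerA.
rewrite -[(1 - t)%:C * (gap_rate j)%:C]rmorphM mulr_gap_rate.
have dC : d%:R != 0 :> C by rewrite pnatr_eq0 -lt0n.
have DC : D%:R != 0 :> C by rewrite pnatr_eq0 -lt0n.
have lC : (2 ^ l)%:R != 0 :> C by rewrite pnatr_eq0 expn_eq0.
apply/matrixP => u v; rewrite !mxE /gap !(rmorphM, rmorphB, fmorphV, rmorph1, rmorph_nat).
by field; rewrite dC DC lC.
Qed.

Lemma PhiM_Nmeas_mixture i : PhiM t (Nmeas psi A) i = mixture i.
Proof.
have [j ->|->] := unliftP ord_max i; first exact: PhiM_Nmeas_lift.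
apply: (eq_last_effect (X := PhiM t (Nmeas psi A)) (Y := fun i => mixture i));
  last exact: PhiM_Nmeas_lift.
rewrite /PhiM Phi_sum N_povm.2 Phi1 exchange_big /=.
rewrite (eq_bigr (fun x => (mix_weight x)%:C *: 1%:M)) => [|x _]; last first.
  rewrite -scaler_sumr postproc_sum //; first exact: mix_postproc_is_postproc.
  exact: (mix_meas_projective x).1.2.
by rewrite -scaler_suml -rmorph_sum mix_weight_sum rmorph1 scale1r.
Qed.

Lemma SP_PhiM_Nmeas : SP (PhiM t (Nmeas psi A)).
Proof.
apply: (SP_mixture _ _ mix_meas_projective mix_postproc_is_postproc PhiM_Nmeas_mixture).
- by case=> [?|]; rewrite ?subr_ge0 // divr_ge0 ?ler0n.
- exact: mix_weight_sum.
Qed.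

End Depolarized.

Lemma threshold_le1 (K : realFieldType) (r D a t : K) :
  0 <= r -> 0 < D -> a <= 1 -> t <= D * a / (r * (1 - a) + D) -> t <= 1.
Proof.
move=> r_ge0 D_gt0 a_le1 t_le; apply: le_trans t_le _.
have r1a_ge0 : 0 <= r * (1 - a) by rewrite mulr_ge0 // subr_ge0.
have D1a_ge0 : 0 <= D * (1 - a) by rewrite mulr_ge0 ?subr_ge0 // ltW.
by rewrite ler_pdivrMr ?ltr_wpDl // mul1r; lra.
Qed.

Lemma threshold_small (K : realFieldType) (r D a t : K) :
  0 <= r -> 0 < D -> a <= 1 -> t <= D * a / (r * (1 - a) + D) ->
  t * (1 - a) / D <= (1 - t) * a / (r + D).
Proof.
move=> r_ge0 D_gt0 a_le1; have r1a_ge0 : 0 <= r * (1 - a) by rewrite mulr_ge0 // subr_ge0.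
rewrite ler_pdivlMr ?ltr_wpDl // ler_pdivrMr // mulrAC ler_pdivlMr ?ltr_wpDl //.
by nra.
Qed.

Theorem lemma7 (R : realType) (d l : nat) (psi : 'I_l -> 'cV[R[i]]_d) (A : 'I_l -> R) :
  (2 * l <= d)%N ->
  (forall k, adj (psi k) *m psi k = 1) ->
  (forall k, 0 <= A k <= 1) ->
  is_povm (Nmeas psi A) ->
  forall t : R, 0 <= t ->
    (forall k, t <= (d - \rank (Wmat psi))%:R * A k /
                    ((\rank (Wmat psi))%:R * (1 - A k) + (d - \rank (Wmat psi))%:R)) ->
    SP (PhiM t (Nmeas psi A)).
Proof.
move=> le_2l_d psi_unit A_in01 N_povm t t_ge0 t_le.
have [l0|l_gt0] := posnP l; first by subst l; apply: SP_PhiM_Nmeas0.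
have [D [b [D_eq b_on b_perp]]] := orthocomplement_onb psi.
have A_ge0 k : 0 <= A k by case/andP: (A_in01 k).
have frame_psd : psd (1%:M - weighted_frame psi A *m adj (weighted_frame psi A)).
  by rewrite weighted_frame_mul_adj //; have := N_povm.1 ord_max; rewrite /Nmeas unlift_none.
have [Y Y_gram] := gram_factor frame_psd.
have r_le_l : (\rank (Wmat psi) <= l)%N by exact: rank_leq_row.
have D_gt0 : (0 < D)%N by rewrite D_eq; lia.
have l_le_D : (l <= D)%N by rewrite D_eq; lia.
have d_gt0 : (0 < d)%N by lia.
have d_eq : d%:R = (\rank (Wmat psi))%:R + D%:R :> R by rewrite D_eq -natrD subnKC //; lia.
have DR_gt0 : 0 < D%:R :> R by rewrite ltr0n.
rewrite -D_eq in t_le.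
apply: (SP_PhiM_Nmeas D_gt0 l_le_D d_gt0 A_in01 psi_unit b_on b_perp Y_gram N_povm t_ge0).
  have [_ a_le1] := andP (A_in01 (Ordinal l_gt0)).
  exact: (threshold_le1 (ler0n _ _) DR_gt0 a_le1 (t_le _)).
move=> j; have [_ a_le1] := andP (A_in01 j).
by rewrite d_eq; apply: (threshold_small (ler0n _ _) DR_gt0 a_le1 (t_le j)).
Qed.
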